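(* Let $M$ be a von Neumann algebra acting on a Hilbert space $H$ and let $a, b \in [0,1]_M$ be strict in $M$. Then: (1) $a^{1/2}$ is strict in $M$; (2) if $ab = ba$, then $ab$ is strict in $M$.
   Context: $[0,1]_M = \{x \in M : 0 \le x \le 1\}$, and $\mathcal{P}(M)$ is the set of projections of $M$. For $x \in [0,1]_M$ define $s(x) = \sup\{q \in \mathcal{P}(M) : q \le x\}$ and $n(x) = \sup\{q \in \mathcal{P}(M) : qx = 0\}$; $x$ is called strict in $M$ if $s(x) = 0$ and $n(x) = 0$. *)

From mathcomp Require Import all_boot all_order all_algebra.
From mathcomp Require Import reals complex.
Set Implicit Arguments. Unset Strict Implicit. Unset Printing Implicit Defensive.
Import Order.TTheory GRing.Theory Num.Theory.
Local Open Scope ring_scope.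

Record hilbert (R : realType) := Hilbert {
  hvec :> lmodType R[i];
  hip : hvec -> hvec -> R[i];
  hip_linear : forall (a : R[i]) (x1 x2 y : hvec),
      hip (a *: x1 + x2) y = a * hip x1 y + hip x2 y;
  hip_conj : forall x y : hvec, hip y x = (hip x y)^*;
  hip_ge0 : forall x : hvec, 0 <= hip x x;
  hip_eq0 : forall x : hvec, hip x x = 0 -> x = 0;
  hip_complete : forall u : nat -> hvec,
      (forall e : R[i], 0 < e -> exists N : nat, forall m n : nat,
          (N <= m)%N -> (N <= n)%N -> hip (u m - u n) (u m - u n) < e) ->
      exists l : hvec, forall e : R[i], 0 < e -> exists N : nat, forall n : nat,
          (N <= n)%N -> hip (u n - l) (u n - l) < e
}.

Section Ops.
Variables (R : realType) (H : hilbert R).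

Definition op := H -> H.

Definition adjoint (T S : op) := forall x y : H, hip (T x) y = hip x (S y).

(* bounded operators on H: linear maps having an adjoint
   (equivalent to boundedness by Hellinger--Toeplitz) *)
Definition is_bop (T : op) :=
  (forall (a : R[i]) (x y : H), T (a *: x + y) = a *: T x + T y) /\
  exists S, adjoint T S.

Definition commutant (S : op -> Prop) : op -> Prop :=
  fun T => is_bop T /\ forall X, S X -> T \o X = X \o T.

Definition von_neumann (M : op -> Prop) :=
  (forall T, M T -> is_bop T) /\
  (forall T S, M T -> adjoint T S -> M S) /\
  M = commutant (commutant M).

Definition zero_op : op := fun _ => 0.

Definition op_le (x y : op) := forall v : H, hip (x v) v <= hip (y v) v.

Definition is_proj (M : op -> Prop) (q : op) :=
  M q /\ q \o q = q /\ adjoint q q.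

Definition unit_interval (M : op -> Prop) (x : op) :=
  M x /\ op_le zero_op x /\ op_le x id.

Definition proj_sup (M : op -> Prop) (P : op -> Prop) (p : op) :=
  is_proj M p /\
  (forall q, is_proj M q -> P q -> op_le q p) /\
  (forall r, is_proj M r -> (forall q, is_proj M q -> P q -> op_le q r) ->
     op_le p r).

(* s(x) = 0 and n(x) = 0 *)
Definition strict (M : op -> Prop) (x : op) :=
  proj_sup M (fun q => op_le q x) zero_op /\
  proj_sup M (fun q => q \o x = zero_op) zero_op.

End Ops.

(* If a in M is a positive contraction and q a projection in M with
   <v,v> <= <av,v> on the range of q, then a fixes that range and q <= a.
   When q <= a^{1/2} or q <= ab, the Cauchy-Schwarz inequality yields exactly
   this bound, so s(a) = 0 forces s(a^{1/2}) = s(ab) = 0.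
   A strict positive x in M is injective: the orthogonal projection onto
   ker x (which exists by the projection theorem, proved from completeness and
   the parallelogram law) commutes with M', so it lies in M'' = M; it
   annihilates x, hence vanishes because n(x) = 0. Then q a^{1/2} = 0 implies
   q a = 0, and q a b = 0 implies b a q = 0, which forces q = 0 by injectivity
   of b and a. *)

From mathcomp Require Import all_boot all_order all_algebra.
From mathcomp Require Import reals complex.
From mathcomp Require Import ring lra.
From mathcomp Require Import boolp classical_sets.
Set Implicit Arguments. Unset Strict Implicit. Unset Printing Implicit Defensive.
Import Order.TTheory GRing.Theory Num.Theory.
Local Open Scope complex_scope.
Local Open Scope ring_scope.
Local Notation Re := complex.Re.

Lemma ler_inv_succ (F : numFieldType) (m n : nat) :
  (m <= n)%N -> n.+1%:R^-1 <= m.+1%:R^-1 :> F.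
Proof. by move=> mn; rewrite lef_pV2 ?posrE // ler_nat ltnS. Qed.

Lemma le_of_sqr_le_mul (F : numDomainType) (x y z : F) :
  0 <= x -> x <= y -> 0 <= z -> y ^+ 2 <= z * x -> x <= z.
Proof.
move=> x0 xy z0 yzx; have [->|xn0] := eqVneq x 0; first by [].
have xgt0 : 0 < x by rewrite lt_neqAle eq_sym xn0.
rewrite -(ler_pM2r xgt0); apply: le_trans yzx.
by rewrite expr2; apply: ler_pM.
Qed.

Lemma discriminant_le (F : realFieldType) (A N B : F) :
  0 <= A -> 0 <= N -> 0 <= B ->
  (forall s, 0 <= A - 2 * s * N + s ^+ 2 * N * B) -> N <= A * B.
Proof.
move=> A0 N0 B0 hs.
have [->|Nn0] := eqVneq N 0; first exact: mulr_ge0.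
have [B0'|Bn0] := eqVneq B 0.
  have := hs ((A + 1) / (2 * N)).
  have -> : A - 2 * ((A + 1) / (2 * N)) * N + ((A + 1) / (2 * N)) ^+ 2 * N * B = -1.
    by rewrite B0'; field; rewrite Nn0.
  by rewrite oppr_ge0 ler10.
have Bgt0 : 0 < B by rewrite lt_neqAle eq_sym Bn0.
have := hs B^-1.
have -> : A - 2 * B^-1 * N + B^-1 ^+ 2 * N * B = A - N / B by field.
by rewrite subr_ge0 ler_pdivrMr.
Qed.

Lemma eq0_of_le_quadratic (F : realFieldType) (c B : F) : 0 <= B ->
  (forall t, 2 * t * c <= t ^+ 2 * B) -> c = 0.
Proof.
move=> B0 h; have B1 : B + 1 != 0 by rewrite lt0r_neq0 // ltr_wpDl.
have := h (c / (B + 1)); set t := c / (B + 1).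
have -> : c = t * (B + 1) by rewrite /t divfK.
move=> ht; have t2 : t ^+ 2 <= 0 by nra.
have -> : t = 0 by apply/eqP; rewrite -sqrf_eq0 eq_le t2 sqr_ge0.
by rewrite mul0r.
Qed.

Lemma sqrtrD_le (F : rcfType) (a b : F) : Num.sqrt (a + b) <= Num.sqrt a + Num.sqrt b.
Proof.
have [a0|a0] := lerP 0 a; last first.
  by rewrite (ltr0_sqrtr a0) add0r; apply: ler_wsqrtr; lra.
have [b0|b0] := lerP 0 b; last first.
  by rewrite (ltr0_sqrtr b0) addr0; apply: ler_wsqrtr; lra.
rewrite -[X in _ <= X]ger0_norm ?addr_ge0 ?sqrtr_ge0 // -sqrtr_sqr ler_sqrt ?sqr_ge0 //.
rewrite sqrrD !sqr_sqrtr //; have := mulr_ge0 (sqrtr_ge0 a) (sqrtr_ge0 b); lra.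
Qed.

Section ComplexParts.
Variable R : rcfType.
Implicit Types (z w : R[i]) (t : R).

Lemma ReD z w : Re (z + w) = Re z + Re w.
Proof. by case: z; case: w. Qed.

Lemma ReN z : Re (- z) = - Re z.
Proof. by case: z. Qed.

Lemma ReJ z : Re z^* = Re z.
Proof. by case: z. Qed.

Lemma ReNiM z : Re (- 'i * z) = complex.Im z.
Proof. by case: z => a b /=; lra. Qed.

Lemma conjC_real t : (t%:C)^* = t%:C :> R[i].
Proof. exact: conjc_real. Qed.

Lemma complex_eq0 z : Re z = 0 -> complex.Im z = 0 -> z = 0.
Proof. by case: z => a b /= -> ->. Qed.

Lemma ge0_RRe z : 0 <= z -> z = (Re z)%:C.
Proof. by move=> z0; rewrite RRe_real // ger0_real. Qed.

End ComplexParts.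

Section InnerProduct.
Variables (R : realType) (H : hilbert R).
Implicit Types (x y z : H) (a : R[i]).

Lemma hipDl x y z : hip (x + y) z = hip x z + hip y z.
Proof. by have := hip_linear 1 x y z; rewrite scale1r mul1r. Qed.

Lemma hip0l z : hip 0 z = 0 :> R[i].
Proof. by apply: (addrI (hip (0 : H) z)); rewrite -hipDl !addr0. Qed.

Lemma hipZl a x z : hip (a *: x) z = a * hip x z.
Proof. by have := hip_linear a x 0 z; rewrite !addr0 hip0l addr0. Qed.

Lemma hipNl x z : hip (- x) z = - hip x z.
Proof. by rewrite -scaleN1r hipZl mulN1r. Qed.

Lemma hipBl x y z : hip (x - y) z = hip x z - hip y z.
Proof. by rewrite hipDl hipNl. Qed.

Lemma hipDr x y z : hip z (x + y) = hip z x + hip z y.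
Proof. by rewrite hip_conj hipDl rmorphD /= -!hip_conj. Qed.

Lemma hip0r z : hip z 0 = 0 :> R[i].
Proof. by rewrite hip_conj hip0l conjC0. Qed.

Lemma hipZr a x z : hip z (a *: x) = a^* * hip z x.
Proof. by rewrite hip_conj hipZl rmorphM /= -!hip_conj. Qed.

Lemma hipNr x z : hip z (- x) = - hip z x.
Proof. by rewrite hip_conj hipNl rmorphN /= -!hip_conj. Qed.

Lemma hipBr x y z : hip z (x - y) = hip z x - hip z y.
Proof. by rewrite hipDr hipNr. Qed.

Lemma hip_extr x y : (forall w, hip w x = hip w y) -> x = y.
Proof.
move=> h; apply/eqP; rewrite -subr_eq0; apply/eqP/hip_eq0.
by rewrite hipBr h subrr.
Qed.

End InnerProduct.

Section Norm.
Variables (R : realType) (H : hilbert R).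
Implicit Types (x y v : H) (t : R).

Definition sqnorm x : R := Re (hip x x).

Lemma sqnormE x : hip x x = (sqnorm x)%:C.
Proof. exact: ge0_RRe (hip_ge0 x). Qed.

Lemma sqnorm_ge0 x : 0 <= sqnorm x.
Proof. by rewrite -lecR -sqnormE hip_ge0. Qed.

Lemma sqnorm_eq0 x : sqnorm x = 0 -> x = 0.
Proof. by move=> x0; apply: hip_eq0; rewrite sqnormE x0. Qed.

Lemma sqnormN x : sqnorm (- x) = sqnorm x.
Proof. by rewrite /sqnorm hipNl hipNr opprK. Qed.

Lemma sqnormZ t x : sqnorm (t%:C *: x) = t ^+ 2 * sqnorm x.
Proof. by rewrite /sqnorm hipZl hipZr conjC_real; case: (hip x x) => a b /=; ring. Qed.

Lemma sqnormD x y :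
  sqnorm (x + y) = sqnorm x + 2 * Re (hip x y) + sqnorm y.
Proof. by rewrite /sqnorm hipDl !hipDr [hip y x]hip_conj !ReD ReJ; ring. Qed.

Lemma sqnormB_scale x y t :
  sqnorm (x - t%:C *: y) = sqnorm x - 2 * t * Re (hip x y) + t ^+ 2 * sqnorm y.
Proof.
rewrite sqnormD sqnormN sqnormZ hipNr hipZr conjC_real ReN.
by case: (hip x y) => a b /=; ring.
Qed.

Lemma apollonius v x y :
  sqnorm (x - y) + 4 * sqnorm (v - (2^-1)%:C *: (x + y)) =
  2 * sqnorm (v - x) + 2 * sqnorm (v - y).
Proof.
have mid : (v - x) + (v - y) = 2%:C *: (v - (2^-1)%:C *: (x + y)).
  rewrite scalerBr scalerA -rmorphM divff ?pnatr_eq0 // scale1r.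
  by rewrite rmorph_nat scaler_nat mulr2n opprD addrACA.
have := sqnormD (v - x) (v - y); have := sqnormD (v - x) (- (v - y)).
rewrite mid sqnormZ sqnormN hipNr ReN.
have -> : v - x - (v - y) = - (x - y) by rewrite opprB addrC addrA subrK opprB.
by rewrite sqnormN => -> h; lra.
Qed.

End Norm.

Section LinearOperators.
Variables (R : realType) (H : hilbert R).
Implicit Types (T : op H) (x y v w : H).

Definition linop T := forall (a : R[i]) x y, T (a *: x + y) = a *: T x + T y.

Definition posop T := [/\ linop T, adjoint T T & forall v, 0 <= hip (T v) v].

Section Linear.
Variables (T : op H) (Tl : linop T).

Lemma linop0 : T 0 = 0.
Proof.
have := Tl 1 0 0; rewrite !scale1r addr0 => h.
by apply: (addrI (T 0)); rewrite addr0 -h.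
Qed.

Lemma linopD x y : T (x + y) = T x + T y.
Proof. by have := Tl 1 x y; rewrite !scale1r. Qed.

Lemma linopZ (a : R[i]) x : T (a *: x) = a *: T x.
Proof. by have := Tl a x 0; rewrite !addr0 linop0 addr0. Qed.

Lemma linopB x y : T (x - y) = T x - T y.
Proof. by rewrite linopD -scaleN1r linopZ scaleN1r. Qed.

End Linear.

End LinearOperators.

Section CauchySchwarz.
Variables (R : realType) (H : hilbert R).
Implicit Types (T : op H) (x y : H).

Lemma posop_CauchySchwarz T x y : posop T ->
  `|hip (T x) y| ^+ 2 <= hip (T x) x * hip (T y) y.
Proof.
case=> Tl Ta Tp.
set z := hip (T x) y; set A := hip (T x) x; set B := hip (T y) y.
have Tyx : hip (T y) x = z^* by rewrite Ta hip_conj.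
have key s : 0 <= A - 2 * s%:C * `|z| ^+ 2 + s%:C ^+ 2 * `|z| ^+ 2 * B.
  have := Tp (x - (s%:C * z) *: y).
  rewrite linopB // linopZ // hipBl !hipBr !hipZl !hipZr Tyx -/A -/B -/z.
  rewrite normCK rmorphM /= conjC_real => /le_trans; apply.
  by rewrite le_eqVlt; apply/orP; left; apply/eqP; ring.
have A0 : 0 <= A by exact: Tp.
have B0 : 0 <= B by exact: Tp.
have N0 : 0 <= `|z| ^+ 2 by rewrite exprn_ge0.
rewrite (ge0_RRe A0) (ge0_RRe B0) (ge0_RRe N0) -rmorphM lecR.
apply: discriminant_le; rewrite -?lecR -?ge0_RRe // => s; rewrite -lecR.
move: (key s); rewrite {1}(ge0_RRe A0) {1}(ge0_RRe B0) {1 2}(ge0_RRe N0).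
by congr (_ <= _); rewrite !rmorphD !rmorphN !rmorphM rmorph_nat /=; ring.
Qed.

Lemma posop_id : posop (@id H).
Proof. by split=> // v; exact: hip_ge0. Qed.

Lemma hip_CauchySchwarz x y : `|hip x y| ^+ 2 <= hip x x * hip y y.
Proof. exact: (posop_CauchySchwarz x y posop_id). Qed.

Lemma Re_hip_CauchySchwarz x y : Re (hip x y) ^+ 2 <= sqnorm x * sqnorm y.
Proof.
have := hip_CauchySchwarz x y; rewrite -add_Re2_Im2 !sqnormE -rmorphM lecR.
by apply: le_trans; rewrite lerDl sqr_ge0.
Qed.

Lemma sqrt_sqnormD x y :
  Num.sqrt (sqnorm (x + y)) <= Num.sqrt (sqnorm x) + Num.sqrt (sqnorm y).
Proof.
set a := Num.sqrt (sqnorm x); set b := Num.sqrt (sqnorm y).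
have a0 : 0 <= a := sqrtr_ge0 _; have b0 : 0 <= b := sqrtr_ge0 _.
have a2 : a ^+ 2 = sqnorm x by rewrite sqr_sqrtr // sqnorm_ge0.
have b2 : b ^+ 2 = sqnorm y by rewrite sqr_sqrtr // sqnorm_ge0.
have cs : Re (hip x y) <= a * b.
  have := Re_hip_CauchySchwarz x y; rewrite -a2 -b2 -exprMn => h.
  have ab0 : 0 <= a * b by rewrite mulr_ge0.
  by nra.
rewrite -[a + b]ger0_norm ?addr_ge0 // -sqrtr_sqr ler_sqrt ?sqr_ge0 //.
by rewrite sqnormD sqrrD a2 b2; lra.
Qed.

End CauchySchwarz.

Section Positive.
Variables (R : realType) (H : hilbert R).
Implicit Types (T q : op H) (x y v w : H).

Lemma selfadjoint_of_real_form T : linop T ->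
  (forall v, hip (T v) v \is Num.real) -> adjoint T T.
Proof.
move=> Tl Treal.
have sym v : hip (T v) v = hip v (T v) by rewrite [RHS]hip_conj conj_Creal.
move=> x y.
have h1 := sym (x + y); have h2 := sym (x + 'i *: y).
rewrite (linopD Tl) !hipDl !hipDr (sym x) (sym y) in h1.
rewrite (linopD Tl) (linopZ Tl) !hipDl !hipDr !hipZl !hipZr (sym x) (sym y) conjCi in h2.
move: h1 h2.
set P := hip x (T x); set Q := hip y (T y).
set a := hip (T x) y; set b := hip (T y) x; set c := hip x (T y); set d := hip y (T x).
move=> h1 h2.
(* polarization: [h1] and [h2] determine [a - c] *)
have : 2 * 'i * (a - c) =
  'i * ((P + a + (b + Q)) - (P + c + (d + Q))) -
  ((P + - 'i * a + ('i * b + 'i * (- 'i * Q))) -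
   (P + - 'i * c + ('i * d + 'i * (- 'i * Q)))) by ring.
rewrite h1 h2 !subrr mulr0 subr0 => /eqP.
by rewrite !mulf_eq0 pnatr_eq0 (negbTE (@neq0Ci _)) /= subr_eq0 => /eqP.
Qed.

Lemma posop_of_bop T : is_bop T -> op_le (@zero_op R H) T -> posop T.
Proof.
move=> [Tl _] T0.
have Tp v : 0 <= hip (T v) v by have := T0 v; rewrite /zero_op hip0l.
by split=> //; apply: selfadjoint_of_real_form => // v; exact: ger0_real.
Qed.

Lemma posop_ker T v : posop T -> hip (T v) v = 0 -> T v = 0.
Proof.
move=> Tp Tv0; apply: hip_eq0.
have := posop_CauchySchwarz v (T v) Tp; rewrite Tv0 mul0r => h.
have : `|hip (T v) (T v)| ^+ 2 == 0 by rewrite eq_le h exprn_ge0.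
by rewrite expf_eq0 normr_eq0 => /eqP.
Qed.

Section Contraction.
Variables (T : op H) (Tp : posop T) (T1 : forall w, hip (T w) w <= hip w w).

Lemma contraction_sqnorm_le v : hip (T v) (T v) <= hip (T v) v.
Proof.
have [_ _ T0] := Tp.
apply: (le_of_sqr_le_mul (hip_ge0 _) (lexx _) (T0 v)).
have := posop_CauchySchwarz v (T v) Tp; rewrite ger0_norm ?hip_ge0 //.
by move/le_trans; apply; apply: ler_wpM2l.
Qed.

Lemma contraction_fixed v : hip v v <= hip (T v) v -> T v = v.
Proof.
have [Tl Ta T0] := Tp => Tv.
pose S w := w - T w.
have Sp : posop S.
  split; first by move=> a x y; rewrite /S (linopD Tl) (linopZ Tl) scalerBr opprD addrACA.
    by move=> x y; rewrite /S hipBl hipBr Ta.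
  by move=> w; rewrite /S hipBl subr_ge0.
apply/eqP; rewrite eq_sym -subr_eq0; apply/eqP/(posop_ker Sp).
by apply/eqP; rewrite eq_le /S hipBl subr_le0 Tv subr_ge0 T1.
Qed.

End Contraction.

Lemma proj_ge0 q v : q \o q = q -> adjoint q q -> 0 <= hip (q v) v.
Proof.
move=> qq qa; have qqv : q (q v) = q v by rewrite -[RHS](congr1 (fun f => f v) qq).
by rewrite -qqv qa hip_ge0.
Qed.

Lemma le_of_fixed_range T q : posop T -> linop q -> adjoint q q -> q \o q = q ->
  (forall w, T (q w) = q w) -> op_le q T.
Proof.
move=> [Tl Ta T0] ql qa qq Tq w.
have qqw : q (q w) = q w by rewrite -[RHS](congr1 (fun f => f w) qq).
set u := w - q w.
have wE : w = q w + u by rewrite /u addrC subrK.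
have Tw : T w = q w + T u by rewrite {1}wE (linopD Tl) Tq.
(* [u] is orthogonal to the range of [q], on which [T] is the identity *)
have Tu_qw : hip (T u) (q w) = 0 by rewrite Ta Tq -qa /u (linopB ql) qqw subrr hip0l.
by rewrite Tw hipDl lerDl {1}wE hipDr Tu_qw add0r T0.
Qed.

End Positive.

Section Projection.
Variables (R : realType) (H : hilbert R).
Implicit Types (K : set H) (u : nat -> H) (x y v k l : H).

Definition converges u l :=
  forall e : R, 0 < e -> exists N, forall n, (N <= n)%N -> sqnorm (u n - l) < e.

Definition subspace K := [/\ K 0, forall x y, K x -> K y -> K (x + y)
  & forall (a : R[i]) x, K x -> K (a *: x)].

Definition seq_closed K := forall u l, (forall n, K (u n)) -> converges u l -> K l.

Lemma hilbert_cauchy u :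
  (forall e : R, 0 < e -> exists N, forall m n,
     (N <= m)%N -> (N <= n)%N -> sqnorm (u m - u n) < e) ->
  exists l, converges u l.
Proof.
move=> cauchy.
have Re_gt0 (e : R[i]) : 0 < e -> 0 < Re e.
  by move=> e0; rewrite -ltcR -ge0_RRe // ltW.
have hipE x (e : R[i]) : 0 < e -> (hip x x < e) = (sqnorm x < Re e).
  by move=> e0; rewrite sqnormE {1}(ge0_RRe (ltW e0)) ltcR.
have [l ul] : exists l, forall e : R[i], 0 < e ->
    exists N, forall n, (N <= n)%N -> hip (u n - l) (u n - l) < e.
  apply: hip_complete => e e0; have [N hN] := cauchy _ (Re_gt0 e e0).
  by exists N => m n hm hn; rewrite hipE // hN.
exists l => e e0; have [|N hN] := ul e%:C; first by rewrite ltcR.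
by exists N => n /hN; rewrite hipE ?ltcR.
Qed.

Lemma minimizer_orthogonal K v k : subspace K -> K k ->
  (forall k', K k' -> sqnorm (v - k) <= sqnorm (v - k')) ->
  forall k', K k' -> hip (v - k) k' = 0.
Proof.
move=> [K0 KD KZ] Kk kmin.
have Re0 k' : K k' -> Re (hip (v - k) k') = 0.
  move=> Kk'; apply: (eq0_of_le_quadratic (sqnorm_ge0 k')) => t.
  have := kmin _ (KD _ _ Kk (KZ t%:C _ Kk')).
  by rewrite opprD addrA sqnormB_scale; lra.
move=> k' Kk'; apply: complex_eq0; first exact: Re0.
by have := Re0 _ (KZ 'i _ Kk'); rewrite hipZr conjCi ReNiM.
Qed.

Lemma sqnorm_le_of_converges u l (c : R) : 0 <= c -> converges u l ->
  (forall n, sqnorm (u n) < c + n.+1%:R^-1) -> sqnorm l <= c.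
Proof.
move=> c0 ul uc; rewrite -ler_sqrt //; apply/ler_addgt0Pr => e e0.
have e2 : 0 < (e / 2) ^+ 2 by rewrite exprn_gt0 // divr_gt0.
have e2E : Num.sqrt ((e / 2) ^+ 2) = e / 2.
  by rewrite sqrtr_sqr ger0_norm // divr_ge0 // ltW.
have [N1 hN1] := ltr_add_invr e2; rewrite add0r in hN1.
have [N2 hN2] := ul _ e2.
pose n := maxn N1 N2.
have n_N1 := ler_inv_succ R (leq_maxl N1 N2 : (N1 <= n)%N).
have close_un : Num.sqrt (sqnorm (u n)) <= Num.sqrt c + e / 2.
  rewrite -e2E; apply: le_trans (sqrtrD_le _ _); apply/ler_wsqrtr/(le_trans (ltW (uc n))).
  by rewrite lerD2l; exact: le_trans n_N1 (ltW hN1).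
have close_l : Num.sqrt (sqnorm (l - u n)) <= e / 2.
  by rewrite -e2E; apply/ler_wsqrtr/ltW; rewrite -sqnormN opprB hN2 ?leq_maxr.
have := sqrt_sqnormD (u n) (l - u n); rewrite addrC subrK; lra.
Qed.

Theorem orthogonal_projection K v : subspace K -> seq_closed K ->
  exists k, K k /\ forall k', K k' -> hip (v - k) k' = 0.
Proof.
move=> Ks Kc; have [K0 KD KZ] := Ks.
pose D := [set sqnorm (v - k) | k in K]%classic.
have D_lb : lbound D 0 by move=> _ [k _ <-]; exact: sqnorm_ge0.
have Dinf : has_inf D by split; [exists (sqnorm (v - 0)); exists 0 | exists 0].
set d := inf D.
have d0 : 0 <= d := lb_le_inf Dinf.1 D_lb.
have d_le k : K k -> d <= sqnorm (v - k) by move=> Kk; apply: (ge_inf Dinf.2); exists k.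
have near_d n : exists k, K k /\ sqnorm (v - k) < d + n.+1%:R^-1.
  have n0 : 0 < n.+1%:R^-1 :> R by rewrite invr_gt0 ltr0Sn.
  by have [_ [k Kk <-] hk] := inf_adherent n0 Dinf; exists k.
have [kn kn_spec] := choice near_d.
have cauchy m n : sqnorm (kn m - kn n) <= 2 * m.+1%:R^-1 + 2 * n.+1%:R^-1.
  have := apollonius v (kn m) (kn n).
  have := d_le _ (KZ (2^-1)%:C _ (KD _ _ (kn_spec m).1 (kn_spec n).1)).
  have := (kn_spec m).2; have := (kn_spec n).2.
  move: (m.+1%:R^-1) (n.+1%:R^-1) => a b; lra.
have [k kn_k] : exists k, converges kn k.
  apply: hilbert_cauchy => e e0.
  have e4 : 0 < e / 4 by rewrite divr_gt0.
  have [N hN] := ltr_add_invr e4.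
  exists N => m n Nm Nn; apply: le_lt_trans (cauchy m n) _.
  have := ler_inv_succ R Nm; have := ler_inv_succ R Nn; rewrite add0r in hN.
  move: (N.+1%:R^-1) (m.+1%:R^-1) (n.+1%:R^-1) hN => a b c; lra.
have Kk : K k by apply: (Kc kn) => // n; exact: (kn_spec n).1.
exists k; split=> //; apply: minimizer_orthogonal => // k' Kk'.
apply: le_trans (d_le _ Kk').
apply: (sqnorm_le_of_converges (u := fun n => v - kn n)) => //; last first.
  by move=> n; exact: (kn_spec n).2.
move=> e /kn_k [N hN]; exists N => n /hN.
have -> : v - kn n - (v - k) = - (kn n - k) by rewrite opprB addrC addrA subrK opprB.
by rewrite sqnormN.
Qed.

End Projection.

Section Kernel.
Variables (R : realType) (H : hilbert R) (X : op H).
Hypothesis Xl : linop X.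

Lemma kernel_subspace : subspace [set k : H | X k = 0].
Proof.
split=> /= [|x y x0 y0|a x x0]; first exact: linop0.
  by rewrite (linopD Xl) x0 y0 addr0.
by rewrite (linopZ Xl) x0 scaler0.
Qed.

Lemma kernel_seq_closed (Y : op H) : adjoint X Y -> seq_closed [set k : H | X k = 0].
Proof.
move=> XY u l /= Xu ul; apply: sqnorm_eq0.
set p := sqnorm (X l); set c := sqnorm (Y (X l)).
suff p2 : p ^+ 2 <= 0 by apply/eqP; rewrite -sqrf_eq0 eq_le p2 sqr_ge0.
apply/ler_addgt0Pr => e e0; rewrite add0r.
have c0 : 0 <= c := sqnorm_ge0 _.
have c1 : 0 < c + 1 by rewrite ltr_wpDl.
have [N hN] := ul _ (divr_gt0 e0 c1).
(* [X l = X (l - u N)], and [l - u N] is small *)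
have pE : p = Re (hip (l - u N) (Y (X l))).
  by rewrite -XY (linopB Xl) Xu subr0.
have := Re_hip_CauchySchwarz (l - u N) (Y (X l)); rewrite -pE -/c.
have : sqnorm (l - u N) < e / (c + 1) by rewrite -sqnormN opprB hN.
have : e / (c + 1) * (c + 1) = e by rewrite divfK // lt0r_neq0.
move: (e / (c + 1)) (sqnorm (l - u N)) => q s; nra.
Qed.

End Kernel.

Section OrthogonalProjector.
Variables (R : realType) (H : hilbert R) (K : set H) (P : op H).
Hypotheses (Ks : subspace K)
  (PK : forall v, K (P v)) (Porth : forall v k, K k -> hip (v - P v) k = 0).

Lemma orth_proj_unique v k : K k -> (forall k', K k' -> hip (v - k) k' = 0) -> P v = k.
Proof.
have [_ KD KZ] := Ks => Kk vk; apply/eqP; rewrite -subr_eq0; apply/eqP/hip_eq0.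
have Kd : K (P v - k) by rewrite -scaleN1r; apply/KD/KZ.
have dE : (v - k) - (v - P v) = P v - k by rewrite opprB addrC subrKA.
by rewrite -{1}dE hipBl vk // Porth // subrr.
Qed.

Lemma orth_proj_id k : K k -> P k = k.
Proof. by move=> Kk; apply: orth_proj_unique => // k' _; rewrite subrr hip0l. Qed.

Lemma orth_proj_idem : P \o P = P.
Proof. by apply: funext => v /=; apply: orth_proj_id. Qed.

Lemma orth_proj_linop : linop P.
Proof.
have [_ KD KZ] := Ks => a x y; apply: orth_proj_unique; first by apply/KD/PK/KZ/PK.
move=> k Kk; have -> : a *: x + y - (a *: P x + P y) = a *: (x - P x) + (y - P y).
  by rewrite scalerBr opprD addrACA.
by rewrite hip_linear !Porth // mulr0 addr0.
Qed.

Lemma orth_proj_selfadjoint : adjoint P P.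
Proof.
move=> x y; rewrite -{1}(subrK (P y) y) -{2}(subrK (P x) x) hipDr hipDl.
by rewrite [hip (P x) (y - P y)]hip_conj !Porth // conjC0.
Qed.

End OrthogonalProjector.

Section VonNeumann.
Variables (R : realType) (H : hilbert R) (M : op H -> Prop).
Hypothesis hM : von_neumann M.
Local Notation Z := (@zero_op R H).

Lemma kernel_proj_mem (X P : op H) : M X -> adjoint X X ->
  (forall v, X (P v) = 0) -> (forall v k, X k = 0 -> hip (v - P v) k = 0) -> M P.
Proof.
move=> MX Xa XP Porth; have [Mbop [_ Mcc]] := hM.
have Xl : linop X := (Mbop X MX).1.
have Ks := kernel_subspace Xl.
rewrite Mcc; split.
  split; first exact: (orth_proj_linop Ks XP Porth).
  by exists P; exact: (orth_proj_selfadjoint XP Porth).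
move=> Y [[Yl [Ys YYs]] YM].
have XY w : Y (X w) = X (Y w) by have := congr1 (fun f => f w) (YM X MX).
have Ys_ker k : X k = 0 -> X (Ys k) = 0.
  move=> Xk; apply: hip_extr => w.
  by rewrite hip0r -Xa -YYs XY Xa Xk hip0r.
apply: funext => w /=; apply: (orth_proj_unique Ks XP Porth).
  by rewrite /= -XY XP (linop0 Yl).
by move=> k Xk; rewrite -(linopB Yl) YYs Porth // Ys_ker.
Qed.

Lemma strict_ker_eq0 X v : M X -> adjoint X X -> strict M X -> X v = 0 -> v = 0.
Proof.
move=> MX Xa sX Xv.
have Xl : linop X := (hM.1 X MX).1.
have Ks := kernel_subspace Xl; have Kc := kernel_seq_closed Xl Xa.
have [P hP] := choice (fun v => orthogonal_projection v Ks Kc).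
have XP w : X (P w) = 0 := (hP w).1.
have Porth w k : X k = 0 -> hip (w - P w) k = 0 := (hP w).2 k.
have Pproj : is_proj M P.
  split; first exact: (kernel_proj_mem MX Xa XP Porth).
  by split; [exact: (orth_proj_idem Ks XP Porth) | exact: (orth_proj_selfadjoint XP Porth)].
have PX : P \o X = Z.
  apply: funext => w; apply: (orth_proj_unique Ks XP Porth); first exact: linop0.
  by move=> k Xk; rewrite subr0 Xa Xk hip0r.
have := sX.2.2.1 P Pproj PX v.
rewrite (orth_proj_id Ks XP Porth Xv) /zero_op hip0l => vv.
by apply: hip_eq0; apply/eqP; rewrite eq_le vv hip_ge0.
Qed.

Lemma proj_sup_zero (Q : op H -> Prop) : M Z ->
  (forall q, is_proj M q -> Q q -> op_le q Z) -> proj_sup M Q Z.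
Proof.
move=> MZ Qle; split; last split=> // r [_ [rr ra]] _ v.
  by split=> //; split; [exact: funext | move=> x y; rewrite /zero_op hip0l hip0r].
by rewrite /zero_op hip0l; exact: proj_ge0.
Qed.

Lemma strict_intro x : M Z ->
  (forall q, is_proj M q -> op_le q x -> op_le q Z) ->
  (forall q, is_proj M q -> q \o x = Z -> op_le q Z) -> strict M x.
Proof. by move=> MZ s n; split; apply: proj_sup_zero. Qed.

Lemma proj_le0_of_range a q : unit_interval M a -> strict M a -> is_proj M q ->
  (forall v, q v = v -> hip v v <= hip (a v) v) -> op_le q Z.
Proof.
move=> [Ma [a0 a1]] sa qP qa; apply: sa.1.2.1 => //.
have [Mq [qq qad]] := qP.
apply: le_of_fixed_range => //; first exact: posop_of_bop (hM.1 a Ma) a0.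
  exact: (hM.1 q Mq).1.
move=> w; apply: (contraction_fixed (posop_of_bop (hM.1 a Ma) a0) a1); apply: qa.
by rewrite -[RHS](congr1 (fun f => f w) qq).
Qed.

Lemma sqrt_strict a r : unit_interval M a -> strict M a ->
  is_bop r -> op_le Z r -> r \o r = a -> strict M r.
Proof.
move=> ha sa rb r0 rra; have [Ma [a0 _]] := ha.
have [_ ra r0'] := posop_of_bop rb r0.
have [_ _ a0'] := posop_of_bop (hM.1 a Ma) a0.
apply: strict_intro; first exact: sa.1.1.1.
  move=> q qP qr; apply: (proj_le0_of_range ha sa qP) => v qv.
  have vr : hip v v <= hip (r v) v by have := qr v; rewrite qv.
  apply: (le_of_sqr_le_mul (hip_ge0 v) vr (a0' v)).
  have := hip_CauchySchwarz (r v) v; rewrite ger0_norm ?r0' // -ra.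
  by rewrite -[r (r v)]/((r \o r) v) rra.
move=> q qP qr; apply: sa.2.2.1 => //.
by rewrite -rra compA qr; apply: funext.
Qed.

Lemma mul_strict a b : unit_interval M a -> unit_interval M b ->
  strict M a -> strict M b -> strict M (a \o b).
Proof.
move=> ha hb sa sb; have [Ma [a0 a1]] := ha; have [Mb [b0 b1]] := hb.
have ap := posop_of_bop (hM.1 a Ma) a0; have bp := posop_of_bop (hM.1 b Mb) b0.
have [_ aa a0'] := ap; have [_ ba _] := bp.
apply: strict_intro; first exact: sa.1.1.1.
  move=> q qP qab; apply: (proj_le0_of_range ha sa qP) => v qv.
  have vab : hip v v <= hip (a (b v)) v by have := qab v; rewrite qv.
  apply: (le_of_sqr_le_mul (hip_ge0 v) vab (a0' v)).
  have := hip_CauchySchwarz (b v) (a v).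
  rewrite -[hip (b v) (a v)]aa ger0_norm; last exact: le_trans (hip_ge0 v) vab.
  move/le_trans; apply; rewrite mulrC; apply: ler_pM; rewrite ?hip_ge0 //.
    exact: contraction_sqnorm_le.
  exact: le_trans (contraction_sqnorm_le bp b1 v) (b1 v).
move=> q [Mq [qq qa]] qab.
have q0 w : q w = 0.
  have baq : b (a (q w)) = 0.
    apply: hip_extr => x; rewrite hip0r -ba -aa -qa.
    by have := congr1 (fun f => f x) qab => /= ->; rewrite /zero_op hip0l.
  exact: (strict_ker_eq0 Ma aa sa (strict_ker_eq0 Mb ba sb baq)).
by move=> v; rewrite q0 /zero_op hip0l.
Qed.

End VonNeumann.

Theorem lemma2p3 (R : realType) (H : hilbert R) (M : op H -> Prop)
  (hM : von_neumann M) (a b : op H)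
  (ha : unit_interval M a) (hb : unit_interval M b)
  (sa : strict M a) (sb : strict M b) :
  (* (1): a^{1/2}, the unique positive operator r with r r = a, is strict *)
  (forall r : op H, is_bop r -> op_le (@zero_op R H) r -> r \o r = a ->
     strict M r) /\
  (* (2) *)
  (a \o b = b \o a -> strict M (a \o b)).
Proof.
split=> [r rb r0 rra | _]; first exact: (sqrt_strict hM ha sa rb r0 rra).
exact: mul_strict.
Qed.
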